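(* Let $\lambda\in\mathbb{R}\setminus\{0\}$, $k\in\mathbb{Z}$, $u\in\mathbb{C}$ with $u\neq1$, and $x,y\in\mathbb{R}$. Then for every integer $n\ge0$, \[ 2\Big\{\sum_{l=0}^{n}\binom{n}{l}(1)_{n-l,\lambda}FG_{l,\lambda}^{[k,c]}(x,y;u)-u\,FG_{n,\lambda}^{[k,c]}(x,y;u)\Big\} =(1-u)\,n\sum_{m=0}^{n-1}\frac{\binom{n-1}{m}}{m+1}\sum_{j=1}^{m+1}\frac{(1)_{j,\lambda}}{j^{k-1}}S_{1,\lambda}(m+1,j)\sum_{l=0}^{n-1-m}\binom{n-1-m}{l}(x)_{n-1-m-l,\lambda}\big((iy)_{l,\lambda}+(-iy)_{l,\lambda}\big) \] and \[ 2i\Big\{\sum_{l=0}^{n}\binom{n}{l}(1)_{n-l,\lambda}FG_{l,\lambda}^{[k,s]}(x,y;u)-u\,FG_{n,\lambda}^{[k,s]}(x,y;u)\Big\} =(1-u)\,n\sum_{m=0}^{n-1}\frac{\binom{n-1}{m}}{m+1}\sum_{j=1}^{m+1}\frac{(1)_{j,\lambda}}{j^{k-1}}S_{1,\lambda}(m+1,j)\sum_{l=0}^{n-1-m}\binom{n-1-m}{l}(x)_{n-1-m-l,\lambda}\big((iy)_{l,\lambda}-(-iy)_{l,\lambda}\big). \]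
   Context: All generating functions are formal power series in $t$. For $z\in\mathbb{C}$: $(z)_{0,\lambda}=1$ and $(z)_{n,\lambda}=z(z-\lambda)\cdots(z-(n-1)\lambda)$ for $n\ge1$. The degenerate exponential is $e_\lambda^{z}(t)=\sum_{n\ge0}(z)_{n,\lambda}\frac{t^n}{n!}$ (i.e. $(1+\lambda t)^{z/\lambda}$), and $e_\lambda(t)=e_\lambda^{1}(t)$. Also $\log_\lambda(1+t)=\frac{1}{\lambda}\big((1+t)^\lambda-1\big)$. The degenerate Stirling numbers of the first kind are defined by $\frac{1}{j!}(\log_\lambda(1+t))^j=\sum_{n\ge j}S_{1,\lambda}(n,j)\frac{t^n}{n!}$. The modified degenerate polyexponential function is $\mathrm{Ei}_{k,\lambda}(x)=\sum_{n\ge1}\frac{(1)_{n,\lambda}}{n^k(n-1)!}x^n$. The degenerate cosine and sine are $\cos_\lambda^{(y)}(t)=\frac{e_\lambda^{iy}(t)+e_\lambda^{-iy}(t)}{2}$ and $\sin_\lambda^{(y)}(t)=\frac{e_\lambda^{iy}(t)-e_\lambda^{-iy}(t)}{2i}$. The cosine and sine degenerate poly-Frobenius-Genocchi polynomials are defined by $\sum_{n\ge0}FG_{n,\lambda}^{[k,c]}(x,y;u)\frac{t^n}{n!}=\frac{(1-u)\mathrm{Ei}_{k,\lambda}(\log_\lambda(1+t))}{e_\lambda(t)-u}e_\lambda^{x}(t)\cos_\lambda^{(y)}(t)$ and $\sum_{n\ge0}FG_{n,\lambda}^{[k,s]}(x,y;u)\frac{t^n}{n!}=\frac{(1-u)\mathrm{Ei}_{k,\lambda}(\log_\lambda(1+t))}{e_\lambda(t)-u}e_\lambda^{x}(t)\sin_\lambda^{(y)}(t)$.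 *)

From HB Require Import structures.
From mathcomp Require Import all_boot all_order all_algebra.
From mathcomp Require Import complex reals.
Set Implicit Arguments. Unset Strict Implicit. Unset Printing Implicit Defensive.
Import Order.TTheory GRing.Theory Num.Theory.
Local Open Scope ring_scope.
Local Open Scope complex_scope.

Section Defs.
Variable R : realType.
Local Notation C := (R[i]).

(* formal power series in t over C, represented by their coefficient sequence *)
Definition ps := nat -> C.

Definition ps_add (f g : ps) : ps := fun n => f n + g n.
Definition ps_scale (c : C) (f : ps) : ps := fun n => c * f n.
Definition ps_mul (f g : ps) : ps := fun n => \sum_(i < n.+1) f i * g (n - i)%N.
Definition ps_pow (f : ps) (m : nat) : ps :=
  iter m (ps_mul f) (fun n => if n == 0%N then 1 else 0).

(* multiplicative inverse of a series with invertible constant term: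
   g 0 = f0^-1,  g n = - f0^-1 * sum_{i=1}^n f i * g (n-i) *)
Fixpoint ps_inv_seq (f : ps) (n : nat) : seq C :=
  match n with
  | 0 => [:: (f 0%N)^-1]
  | n'.+1 => let s := ps_inv_seq f n' in
      rcons s (- (f 0%N)^-1 *
               \sum_(1 <= i < n'.+2) f i * nth 0 s (n'.+1 - i)%N)
  end.
Definition ps_inv (f : ps) : ps := fun n => nth 0 (ps_inv_seq f n) n.
Definition ps_div (f g : ps) : ps := ps_mul f (ps_inv g).

(* composition a(L(t)) for a series L with zero constant term:
   [t^N] a(L) = sum_{m <= N} a_m [t^N] L^m *)
Definition ps_comp (a L : ps) : ps :=
  fun N => \sum_(m < N.+1) a m * ps_pow L m N.

Definition dfall (z : C) (n : nat) (lam : R) : C :=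
  \prod_(i < n) (z - (i%:R * lam)%:C).

Definition dexp (lam : R) (z : C) : ps := fun n => dfall z n lam / (n`!)%:R.

(* log_lam(1+t) = ((1+t)^lam - 1)/lam, with (1+t)^lam = e_1^lam(t) *)
Definition dlog1p (lam : R) : ps :=
  fun n => if n == 0%N then 0 else dexp 1 lam%:C n / lam%:C.

(* S_{1,lam}(n,j) : (1/j!) (log_lam(1+t))^j = sum_n S_{1,lam}(n,j) t^n/n! *)
Definition S1 (lam : R) (n j : nat) : C :=
  (n`!)%:R * (ps_pow (dlog1p lam) j n / (j`!)%:R).

Definition Ei_coef (k : int) (lam : R) : ps :=
  fun n => if n == 0%N then 0
           else dfall 1 n lam / ((n%:R : C) ^ k * ((n.-1)`!)%:R).

Definition dcos (lam y : R) : ps :=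
  fun n => (dexp lam (y%:C * 'i) n + dexp lam (- (y%:C * 'i)) n) / 2%:R.
Definition dsin (lam y : R) : ps :=
  fun n => (dexp lam (y%:C * 'i) n - dexp lam (- (y%:C * 'i)) n) / (2%:R * 'i).

(* generating function (1-u) Ei_{k,lam}(log_lam(1+t)) / (e_lam(t) - u) * e_lam^x(t) * trig(t) *)
Definition FG_gf (k : int) (lam : R) (u : C) (x : R) (trig : ps) : ps :=
  ps_mul (ps_mul (ps_div (ps_scale (1 - u) (ps_comp (Ei_coef k lam) (dlog1p lam)))
                         (ps_add (dexp lam 1) (fun n => if n == 0%N then - u else 0)))
                 (dexp lam x%:C)) trig.

Definition FGc (n : nat) (lam : R) (k : int) (x y : R) (u : C) : C :=
  (n`!)%:R * FG_gf k lam u x (dcos lam y) n.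
Definition FGs (n : nat) (lam : R) (k : int) (x y : R) (u : C) : C :=
  (n`!)%:R * FG_gf k lam u x (dsin lam y) n.

End Defs.

From HB Require Import structures.
From mathcomp Require Import all_boot all_order all_algebra.
From mathcomp Require Import complex reals.
From mathcomp Require Import ring zify.
Set Implicit Arguments. Unset Strict Implicit. Unset Printing Implicit Defensive.
Import Order.TTheory GRing.Theory Num.Theory.
Local Open Scope ring_scope.
Local Open Scope complex_scope.

(* Multiplying the generating function by its denominator gives
   FG(t) (e_lam(t) - u) = (1 - u) Ei_{k,lam}(log_lam(1+t)) e_lam^x(t) trig(t).
   On the left, n! [t^n] is the binomial convolution with (1)_{n-l,lam} minus
   u FG_n.  On the right, Ei_{k,lam}(log_lam(1+t)) has no constant term and
   (m+1)! times its coefficient of t^(m+1) is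
   sum_j (1)_{j,lam} / j^(k-1) S_{1,lam}(m+1,j); the identity
   binom(n,m+1) = n/(m+1) binom(n-1,m) then gives the stated shape.
   Identities between series products are checked on truncations modulo t^(n+1),
   where the ring laws of polynomials are available. *)

Lemma modp_mulml (F : fieldType) (d p q : {poly F}) :
  (p %% d * q) %% d = (p * q) %% d.
Proof. by rewrite mulrC modp_mul mulrC. Qed.

Section SeriesInverse.
Variable R : realType.
Local Notation C := R[i].

Definition ps_const (c : C) : ps R := fun m => if m == 0%N then c else 0.

Lemma size_ps_inv_seq (f : ps R) m : size (ps_inv_seq f m) = m.+1.
Proof. by elim: m => [|m IH] //=; rewrite size_rcons IH. Qed.

Lemma nth_ps_inv_seq (f : ps R) m i :
  (i <= m)%N -> nth 0 (ps_inv_seq f m) i = ps_inv f i.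
Proof.
elim: m i => [|m IH] i; first by rewrite leqn0 => /eqP ->.
rewrite leq_eqVlt => /orP[/eqP -> // | lt_im].
by rewrite /= nth_rcons size_ps_inv_seq lt_im IH.
Qed.

Lemma ps_invS (f : ps R) m : ps_inv f m.+1 =
  - (f 0%N)^-1 * \sum_(1 <= i < m.+2) f i * ps_inv f (m.+1 - i)%N.
Proof.
rewrite {1}/ps_inv /= nth_rcons size_ps_inv_seq ltnn eqxx.
congr (_ * _); apply: eq_big_nat => i /andP[i_gt0 i_le].
by rewrite nth_ps_inv_seq //; lia.
Qed.

Lemma ps_mul_inv (f : ps R) m :
  f 0%N != 0 -> ps_mul f (ps_inv f) m = ps_const 1 m.
Proof.
move=> f0; case: m => [|m]; first by rewrite /ps_mul big_ord1 mulfV.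
rewrite /ps_mul big_ord_recl subn0 ps_invS big_add1 big_mkord.
by rewrite mulrA mulrN mulfV // mulN1r addNr.
Qed.

End SeriesInverse.

Section Truncation.
Variables (R : realType) (n : nat).
Local Notation C := R[i].

Definition trunc (f : ps R) : {poly C} := \poly_(i < n.+1) f i.

Lemma coef_trunc f i : (i <= n)%N -> (trunc f)`_i = f i.
Proof. by move=> le_in; rewrite coef_poly ltnS le_in. Qed.

Lemma trunc_mul f g : trunc (ps_mul f g) = (trunc f * trunc g) %% 'X^(n.+1).
Proof.
apply/polyP => i; rewrite -Pdiv.IdomainMonic.take_poly_modp coef_take_poly coef_poly coefM.
case: ltnP => // lt_in; apply: eq_bigr => j _.
by rewrite !coef_trunc //; move: (ltn_ord j); lia.
Qed.

Lemma trunc_scale c f : trunc (ps_scale c f) = c *: trunc f.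
Proof. by apply/polyP => i; rewrite coefZ !coef_poly; case: ltnP; rewrite ?mulr0. Qed.

Lemma trunc_mul_inv f : f 0%N != 0 -> (trunc f * trunc (ps_inv f)) %% 'X^(n.+1) = 1.
Proof.
move=> f0; rewrite -trunc_mul; apply/polyP => i.
rewrite coef_poly ps_mul_inv // coef1 /ps_const.
by case: ltnP => // lt_ni; case: eqP => // i0; move: lt_ni; rewrite i0.
Qed.

End Truncation.

Section Coefficients.
Variable R : realType.
Local Notation C := R[i].

Lemma fact_neq0 m : ((m`!)%:R : C) != 0.
Proof. by rewrite pnatr_eq0 -lt0n fact_gt0. Qed.

Lemma natS_neq0 m : ((m.+1)%:R : C) != 0.
Proof. by rewrite pnatr_eq0. Qed.

Lemma fact_dexp (lam : R) (z : C) m : (m`!)%:R * dexp lam z m = dfall z m lam.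
Proof. by rewrite /dexp mulrC divfK ?fact_neq0. Qed.

Lemma ps_mulDr (f g h : ps R) m :
  ps_mul f (ps_add g h) m = ps_mul f g m + ps_mul f h m.
Proof. by rewrite /ps_mul -big_split; apply: eq_bigr => i _; rewrite mulrDr. Qed.

Lemma ps_mul_constr (f : ps R) c m : ps_mul f (ps_const c) m = f m * c.
Proof.
rewrite /ps_mul big_ord_recr /= subnn big1 ?add0r // => i _.
by rewrite /ps_const subn_eq0 leqNgt ltn_ord mulr0.
Qed.

Lemma fact_ps_mul (f g : ps R) m :
  (m`!)%:R * ps_mul f g m =
  \sum_(l < m.+1) 'C(m, l)%:R * ((l`!)%:R * f l) * (((m - l)`!)%:R * g (m - l)%N).
Proof.
rewrite mulr_sumr; apply: eq_bigr => l _.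
by rewrite -(bin_fact (ltn_ord l : (l <= m)%N)) !natrM; ring.
Qed.

(* Splitting off the vanishing term l = 0 and using
   m binom(m-1, j) = (j+1) binom(m, j+1). *)
Lemma fact_ps_mul_shift (f g : ps R) m : f 0%N = 0 ->
  (m`!)%:R * ps_mul f g m =
  m%:R * \sum_(j < m) ('C(m.-1, j)%:R / (j.+1)%:R * ((j.+1`!)%:R * f j.+1) *
                       (((m.-1 - j)`!)%:R * g (m.-1 - j)%N)).
Proof.
move=> f0; rewrite fact_ps_mul big_ord_recl f0 !mulr0 mul0r add0r mulr_sumr.
apply: eq_bigr => j _; rewrite /bump /=.
have -> : (m - j.+1 = m.-1 - j)%N by move: (ltn_ord j); lia.
have binS : (m%:R : C) * 'C(m.-1, j)%:R = (j.+1)%:R * 'C(m, j.+1)%:R.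
  by rewrite -!natrM mul_bin_diag.
by rewrite !mulrA binS [_ * 'C(m, _)%:R]mulrC mulfK ?natS_neq0.
Qed.

Lemma fact_ps_mul_dexp (lam : R) (z : C) (f : ps R) (d : C) (T : nat -> C) N :
  (forall j, (j`!)%:R * (d * f j) = T j) ->
  d * ((N`!)%:R * ps_mul f (dexp lam z) N) =
  \sum_(l < N.+1) 'C(N, l)%:R * dfall z (N - l) lam * T l.
Proof.
move=> dT; rewrite fact_ps_mul mulr_sumr; apply: eq_bigr => l _.
by rewrite fact_dexp -dT; ring.
Qed.

Lemma fact_Ei_comp_dlog1p (k : int) (lam : R) m :
  ((m.+1)`!)%:R * ps_comp (Ei_coef k lam) (dlog1p lam) m.+1 =
  \sum_(1 <= j < m.+2) dfall 1 j lam / ((j%:R : C) ^ (k - 1)) * S1 lam m.+1 j.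
Proof.
rewrite /ps_comp big_ord_recl /= {1}/Ei_coef eqxx mul0r add0r.
rewrite big_add1 /= big_mkord mulr_sumr; apply: eq_bigr => j _.
rewrite /Ei_coef /S1 /bump /= !add1n (factS j) natrM.
have jk : ((j.+1)%:R : C) ^ k = (j.+1)%:R ^ (k - 1) * (j.+1)%:R.
  by rewrite -{1}(subrK 1 k) expfzDr ?natS_neq0 // expr1z.
have jk0 : ((j.+1)%:R : C) ^ (k - 1) != 0 by rewrite expfz_neq0 ?natS_neq0.
rewrite jk; set z := _ ^ (k - 1); field.
by rewrite add0n fact_neq0 [1 + _]addrC natr1 natS_neq0 /z jk0.
Qed.

Lemma Ei_comp_dlog1p0 (k : int) (lam : R) :
  ps_comp (Ei_coef k lam) (dlog1p lam) 0%N = 0.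
Proof. by rewrite /ps_comp big_ord1 /Ei_coef eqxx mul0r. Qed.

End Coefficients.

Section GeneratingFunction.
Variables (R : realType) (k : int) (lam : R) (u : R[i]) (x : R).
Local Notation C := R[i].

Definition FG_den : ps R := ps_add (dexp lam 1) (ps_const (- u)).

Local Notation Ei_log := (ps_comp (Ei_coef k lam) (dlog1p lam)).

Lemma FG_gf_mul_den (trig : ps R) m : u != 1 ->
  ps_mul (FG_gf k lam u x trig) FG_den m =
  (1 - u) * ps_mul Ei_log (ps_mul trig (dexp lam x%:C)) m.
Proof.
move=> u1; have den0 : FG_den 0%N != 0.
  by rewrite /FG_den /ps_add /ps_const /dexp /dfall big_ord0 divr1 subr_eq0 eq_sym.
suff trunc_eq : trunc m (ps_mul (FG_gf k lam u x trig) FG_den) =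
    (1 - u) *: trunc m (ps_mul Ei_log (ps_mul trig (dexp lam x%:C))).
  by move/(congr1 (coefp m)): trunc_eq; rewrite /= coefZ !coef_trunc.
rewrite /FG_gf /ps_div -/(ps_const (- u)) -/FG_den !trunc_mul trunc_scale.
rewrite -modpZl !modp_mulml -mulrA modp_mulml modpZl modp_mul -!scalerAl modpZl.
congr (_ *: _).
set E := trunc m Ei_log; set T := trunc m trig; set X := trunc m (dexp lam x%:C).
set D := trunc m FG_den; set D' := trunc m (ps_inv FG_den).
have -> : E * D' * X * (T * D) = E * (T * X) * (D * D') by ring.
by rewrite -[LHS]modp_mul /D /D' trunc_mul_inv // mulr1.
Qed.

Lemma fact_ps_mul_den (f : ps R) m :
  (m`!)%:R * ps_mul f FG_den m =
  \sum_(l < m.+1) 'C(m, l)%:R * dfall 1 (m - l) lam * ((l`!)%:R * f l)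
  - u * ((m`!)%:R * f m).
Proof.
rewrite ps_mulDr ps_mul_constr mulrDr fact_ps_mul; congr (_ + _); last by ring.
by apply: eq_bigr => l _; rewrite fact_dexp mulrAC.
Qed.

(* [d] clears the denominator 2 or 2i of the degenerate cosine or sine. *)
Lemma FG_gf_identity (trig : ps R) (d : C) (T : nat -> C) m : u != 1 ->
  (forall j, (j`!)%:R * (d * trig j) = T j) ->
  d * (\sum_(l < m.+1) 'C(m, l)%:R * dfall 1 (m - l) lam *
                       ((l`!)%:R * FG_gf k lam u x trig l)
       - u * ((m`!)%:R * FG_gf k lam u x trig m)) =
  (1 - u) * m%:R *
  \sum_(j < m)
    ('C(m.-1, j)%:R / (j.+1)%:R *
     (\sum_(1 <= i < j.+2) dfall 1 i lam / ((i%:R : C) ^ (k - 1)) * S1 lam j.+1 i) *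
     \sum_(l < (m.-1 - j).+1)
        'C(m.-1 - j, l)%:R * dfall x%:C (m.-1 - j - l) lam * T l).
Proof.
move=> u1 dT; rewrite -fact_ps_mul_den FG_gf_mul_den //.
rewrite [_ * (_ * ps_mul _ _ _)]mulrCA fact_ps_mul_shift ?Ei_comp_dlog1p0 //.
rewrite mulrCA -mulrA; congr (_ * _).
rewrite mulrCA mulr_sumr; congr (_ * _); apply: eq_bigr => j _.
by rewrite fact_Ei_comp_dlog1p -(fact_ps_mul_dexp lam x%:C _ dT); ring.
Qed.

End GeneratingFunction.

Theorem theorem5 (R : realType) (lam : R) (k : int) (u : R[i]) (x y : R)
  (hlam : lam != 0) (hu : u != 1) (n : nat) :
  let rhs (sgn : R[i]) :=
    (1 - u) * n%:R *
    \sum_(m < n)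
      ('C(n.-1, m)%:R / (m.+1)%:R *
       (\sum_(1 <= j < m.+2)
          dfall 1 j lam / ((j%:R : R[i]) ^ (k - 1)) * S1 lam m.+1 j) *
       \sum_(l < (n.-1 - m).+1)
          'C(n.-1 - m, l)%:R * dfall x%:C (n.-1 - m - l) lam *
          (dfall (y%:C * 'i) l lam + sgn * dfall (- (y%:C * 'i)) l lam)) in
  2%:R * (\sum_(l < n.+1) 'C(n, l)%:R * dfall 1 (n - l) lam * FGc l lam k x y u
          - u * FGc n lam k x y u) = rhs 1
  /\
  2%:R * 'i * (\sum_(l < n.+1) 'C(n, l)%:R * dfall 1 (n - l) lam * FGs l lam k x y u
          - u * FGs n lam k x y u) = rhs (-1).
Proof.
(* The identity is formal in lam. *)
move=> rhs.
pose T sgn l := dfall (y%:C * 'i) l lam + sgn * dfall (- (y%:C * 'i)) l lam.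
split.
- apply: (FG_gf_identity k lam x n (T := T 1)) => // j.
  by rewrite /dcos /T -!fact_dexp; field.
- apply: (FG_gf_identity k lam x n (T := T (-1))) => // j.
  by rewrite /dsin /T -!fact_dexp; field; exact: neq0Ci.
Qed.
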